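(* A total ${\cal X}_5$-interpretation $M=\langle T,T\rangle$ is an equilibrium model of a theory $\Gamma$ if and only if $M(\varphi)=2$ for all $\varphi\in\Gamma$ and there is no ${\cal X}_5$-interpretation $M'$ with $M'\le M$, $M'\ne M$, such that $M'(\varphi)=2$ for all $\varphi\in\Gamma$.
   Context: Fix a set $\mathit{At}$ of atoms. An explicit literal is $p$ or $\sim p$ for $p\in\mathit{At}$; a set of explicit literals is consistent if it never contains both $p$ and $\sim p$. Formulas: $\varphi ::= p\mid\bot\mid\varphi\wedge\varphi\mid\varphi\vee\varphi\mid\varphi\to\varphi\mid\sim\varphi$; abbreviations $\neg\varphi:=\varphi\to\bot$, $\top:=\neg\bot$; a theory is a set of formulas. An ${\cal X}_5$-interpretation is a pair $\langle H,T\rangle$ of consistent sets of explicit literals with $H\subseteq T$; total if $H=T$. Satisfaction $\models$ and falsification $=\!\!|\;$: $\langle H,T\rangle\not\models\bot$, $\langle H,T\rangle=\!\!|\;\bot$; $\models p$ iff $p\in H$, $=\!\!|\;p$ iff $\sim p\in H$; $\models\varphi\wedge\psi$ iff both satisfied, $=\!\!|\;\varphi\wedge\psi$ iff at least one falsified; $\models\varphi\vee\psi$ iff at least one satisfied, $=\!\!|\;\varphi\vee\psi$ iff both falsified; $\models\sim\varphi$ iff $=\!\!|\;\varphi$, $=\!\!|\;\sim\varphi$ iff $\models\varphi$; $\langle H,T\rangle\models\varphi\to\psi$ iff (i) $\langle H,T\rangle\not\models\varphi$ or $\langle H,T\rangle\models\psi$ and (ii) $\langle T,T\rangle\not\models\varphi$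 or $\langle T,T\rangle\models\psi$; $\langle H,T\rangle=\!\!|\;\varphi\to\psi$ iff $\langle T,T\rangle\models\varphi$ and $\langle H,T\rangle=\!\!|\;\psi$. $\langle T,T\rangle$ is an equilibrium model of $\Gamma$ if it satisfies every formula of $\Gamma$ and there is no $\langle H,T\rangle$ with $H\subsetneq T$ satisfying every formula of $\Gamma$. Five-valued valuation of $M=\langle H,T\rangle$: $M(p)=2$ if $p\in H$; $-2$ if $\sim p\in H$; $1$ if $p\in T\setminus H$; $-1$ if $\sim p\in T\setminus H$; $0$ otherwise; $M(\bot)=-2$, $M(\top)=2$, $M(\varphi\wedge\psi)=\min$, $M(\varphi\vee\psi)=\max$, $M(\varphi\to\psi)=2$ if $M(\varphi)\le\max(M(\psi),0)$ and $M(\psi)$ otherwise, $M(\sim\varphi)=-M(\varphi)$. For ${\cal X}_5$-interpretations $M=\langle H,T\rangle$, $M'=\langle H',T'\rangle$, $M\le M'$ means $T=T'$ and $H\subseteq H'$. *)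

From Stdlib Require Import ZArith Bool.
Open Scope Z_scope.

Inductive lit (At : Type) : Type :=
| Pos : At -> lit At
| Neg : At -> lit At.
Arguments Pos {At} _.
Arguments Neg {At} _.

Inductive form (At : Type) : Type :=
| Atom : At -> form At
| Bot : form At
| And : form At -> form At -> form At
| Or : form At -> form At -> form At
| Imp : form At -> form At -> form At
| SNeg : form At -> form At.
Arguments Atom {At} _.
Arguments Bot {At}.
Arguments And {At} _ _.
Arguments Or {At} _ _.
Arguments Imp {At} _ _.
Arguments SNeg {At} _.

Definition litset (At : Type) := lit At -> bool.

Definition consistent {At} (S : litset At) : Prop :=
  forall p : At, ~ (S (Pos p) = true /\ S (Neg p) = true).

Definition lsubset {At} (A B : litset At) : Prop :=
  forall l, A l = true -> B l = true.

Definition X5interp {At} (H T : litset At) : Prop :=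
  consistent H /\ consistent T /\ lsubset H T.

Fixpoint sat {At} (H T : litset At) (f : form At) {struct f} : Prop :=
  match f with
  | Atom p => H (Pos p) = true
  | Bot => False
  | And a b => sat H T a /\ sat H T b
  | Or a b => sat H T a \/ sat H T b
  | Imp a b => (~ sat H T a \/ sat H T b) /\ (~ sat T T a \/ sat T T b)
  | SNeg a => fal H T a
  end
with fal {At} (H T : litset At) (f : form At) {struct f} : Prop :=
  match f with
  | Atom p => H (Neg p) = true
  | Bot => True
  | And a b => fal H T a \/ fal H T b
  | Or a b => fal H T a /\ fal H T b
  | Imp a b => sat T T a /\ fal H T b
  | SNeg a => sat H T a
  end.

Definition theory (At : Type) := form At -> Prop.

Definition equilibrium_model {At} (Gamma : theory At) (T : litset At) : Prop :=
  (forall f, Gamma f -> sat T T f) /\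
  ~ (exists H : litset At,
       X5interp H T /\ lsubset H T /\ (exists l, T l = true /\ H l = false) /\
       (forall f, Gamma f -> sat H T f)).

Definition val_atom {At} (H T : litset At) (p : At) : Z :=
  if H (Pos p) then 2
  else if H (Neg p) then -2
  else if T (Pos p) then 1
  else if T (Neg p) then -1
  else 0.

Fixpoint val {At} (H T : litset At) (f : form At) : Z :=
  match f with
  | Atom p => val_atom H T p
  | Bot => -2
  | And a b => Z.min (val H T a) (val H T b)
  | Or a b => Z.max (val H T a) (val H T b)
  | Imp a b => if val H T a <=? Z.max (val H T b) 0 then 2 else val H T b
  | SNeg a => - val H T a
  end.

Definition x5_le {At} (M' M : litset At * litset At) : Prop :=
  snd M' = snd M /\ lsubset (fst M') (fst M).

(* The value M(φ) of an X5-interpretation M = <H,T> records at once the status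
   of φ at H (values 2 and -2: satisfied, falsified) and at T (values >= 1 and
   <= -1), so M(φ) = 2 exactly when M satisfies φ.  With this, the condition on
   five-valued models is the definition of equilibrium model read through the
   valuation, since M' <= <T,T> with M' <> <T,T> means M' = <H,T> with H ⊊ T. *)
From Stdlib Require Import ZArith Lia Classical FunctionalExtensionality.
Open Scope Z_scope.

(* The clauses are proved together: strong negation swaps satisfaction with
   falsification, and implication consults the value at T. *)
Definition val_spec {At} (H T : litset At) (f : form At) : Prop :=
  (val H T f = 2 <-> sat H T f) /\
  (val H T f = -2 <-> fal H T f) /\
  (1 <= val H T f <-> sat T T f) /\
  (val H T f <= -1 <-> fal T T f) /\
  -2 <= val H T f <= 2.

Lemma val_atom_spec {At} (H T : litset At) (p : At) :
  X5interp H T -> val_spec H T (Atom p).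
Proof.
  intros [cH [cT sub]]; unfold val_spec; simpl; unfold val_atom.
  specialize (cH p); specialize (cT p).
  pose proof (sub (Pos p)); pose proof (sub (Neg p)).
  destruct (H (Pos p)), (H (Neg p)), (T (Pos p)), (T (Neg p));
    intuition (try discriminate; try lia).
Qed.

Lemma val_specP {At} (H T : litset At) (f : form At) :
  X5interp H T -> val_spec H T f.
Proof.
  intros X; unfold val_spec.
  induction f as [p| |a IHa b IHb|a IHa b IHb|a IHa b IHb|a IHa]; simpl.
  - exact (val_atom_spec H T p X).
  - intuition lia.
  - destruct IHa as [a1 [a2 [a3 [a4 a5]]]], IHb as [b1 [b2 [b3 [b4 b5]]]].
    rewrite <- a1, <- a2, <- a3, <- a4, <- b1, <- b2, <- b3, <- b4; lia.
  - destruct IHa as [a1 [a2 [a3 [a4 a5]]]], IHb as [b1 [b2 [b3 [b4 b5]]]].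
    rewrite <- a1, <- a2, <- a3, <- a4, <- b1, <- b2, <- b3, <- b4; lia.
  - destruct IHa as [a1 [_ [a3 [_ a5]]]], IHb as [b1 [b2 [b3 [b4 b5]]]].
    rewrite <- a1, <- a3, <- b1, <- b2, <- b3, <- b4.
    destruct (Z.leb_spec (val H T a) (Z.max (val H T b) 0)); lia.
  - destruct IHa as [a1 [a2 [a3 [a4 a5]]]].
    rewrite <- a1, <- a2, <- a3, <- a4; lia.
Qed.

Lemma val_eq2_sat {At} (H T : litset At) (f : form At) :
  X5interp H T -> val H T f = 2 <-> sat H T f.
Proof. intros X; apply (val_specP H T f X). Qed.

Lemma val_eq2_sat_theory {At} (Gamma : theory At) (H T : litset At) :
  X5interp H T ->
  (forall f, Gamma f -> val H T f = 2) <-> (forall f, Gamma f -> sat H T f).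
Proof.
  intros X; split; intros G f Gf; apply (val_eq2_sat H T f X); auto.
Qed.

Lemma X5interp_total {At} (T : litset At) : consistent T -> X5interp T T.
Proof. intros cT; repeat split; auto; intros l; auto. Qed.

Lemma lsubset_strict_neq {At} (H T : litset At) :
  lsubset H T -> (exists l, T l = true /\ H l = false) <-> H <> T.
Proof.
  intros s; split.
  - intros [l [Tl Hl]] ->; congruence.
  - intros ne; apply NNPP; intros C; apply ne, functional_extensionality; intros l.
    destruct (H l) eqn:Hl, (T l) eqn:Tl; auto.
    + apply s in Hl; congruence.
    + exfalso; apply C; exists l; auto.
Qed.

Lemma smaller_models_pairs {At} (Gamma : theory At) (T : litset At) :
  (exists H : litset At,
     X5interp H T /\ lsubset H T /\ (exists l, T l = true /\ H l = false) /\
     (forall f, Gamma f -> sat H T f)) <->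
  (exists M' : litset At * litset At,
     X5interp (fst M') (snd M') /\ x5_le M' (T, T) /\ M' <> (T, T) /\
     (forall f, Gamma f -> val (fst M') (snd M') f = 2)).
Proof.
  split.
  - intros [H [X [s [strict G]]]].
    exists (H, T); simpl; split; [exact X|]; split; [split; auto|]; split.
    + intros E; injection E; apply lsubset_strict_neq; auto.
    + apply val_eq2_sat_theory; auto.
  - intros [[H T'] [X [[e s] [ne G]]]]; simpl in *; subst T'.
    exists H; split; [exact X|]; split; [exact s|]; split.
    + apply lsubset_strict_neq; auto; intros ->; auto.
    + apply val_eq2_sat_theory; auto.
Qed.

Theorem theorem6 (At : Type) (Gamma : theory At) (T : litset At) :
  consistent T ->
  (equilibrium_model Gamma T <->
   ((forall f, Gamma f -> val T T f = 2) /\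
    ~ (exists M' : litset At * litset At,
         X5interp (fst M') (snd M') /\ x5_le M' (T, T) /\ M' <> (T, T) /\
         (forall f, Gamma f -> val (fst M') (snd M') f = 2)))).
Proof.
  intros cT; unfold equilibrium_model.
  rewrite (val_eq2_sat_theory Gamma T T (X5interp_total T cT)).
  rewrite (smaller_models_pairs Gamma T).
  reflexivity.
Qed.
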